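(* Let $d>0$ and let $\triangle ABC$ be a geodesic triangle in hyperbolic space. Suppose that for each vertex $V\in\{A,B,C\}$, the ball of radius $d+\operatorname{arccosh}(2/\sqrt3)$ centered at $V$ is separated by a hyperplane from the other two vertices. Then the Fermat point $F$ of $\triangle ABC$ lies inside the triangle and $|FA|,|FB|,|FC|$ are all greater than $d$.
   Context: The Fermat point of a geodesic triangle $\triangle ABC$ is the point $F$ of the $2$-simplex spanned by the triangle minimizing $|FA|+|FB|+|FC|$. *)

From Stdlib Require Import Reals.
Open Scope R_scope.

Fixpoint sdot (n : nat) (x y : nat -> R) : R :=
  match n with
  | O => 0
  | S m => sdot m x y + x (S m) * y (S m)
  end.

Definition mdot (n : nat) (x y : nat -> R) : R := - (x 0%nat * y 0%nat) + sdot n x y.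

(* points of hyperbolic n-space H^n = upper sheet of the hyperboloid
   (only coordinates 0..n are meaningful) *)
Definition hyp (n : nat) (x : nat -> R) : Prop := mdot n x x = -1 /\ 0 < x 0%nat.

Definition arccosh (t : R) : R := ln (t + sqrt (t * t - 1)).

Definition hdist (n : nat) (x y : nat -> R) : R := arccosh (- mdot n x y).

(* the 2-simplex spanned by the geodesic triangle ABC: geodesic convex hull,
   i.e. points of H^n that are nonnegative combinations of A, B, C *)
Definition in_simplex (n : nat) (A B C F : nat -> R) : Prop :=
  hyp n F /\ exists a b c : R, 0 <= a /\ 0 <= b /\ 0 <= c /\
    forall i : nat, (i <= n)%nat -> F i = a * A i + b * B i + c * C i.

Definition in_triangle_interior (n : nat) (A B C F : nat -> R) : Prop :=
  hyp n F /\ exists a b c : R, 0 < a /\ 0 < b /\ 0 < c /\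
    forall i : nat, (i <= n)%nat -> F i = a * A i + b * B i + c * C i.

Definition fsum (n : nat) (A B C F : nat -> R) : R :=
  hdist n F A + hdist n F B + hdist n F C.

Definition is_fermat_point (n : nat) (A B C F : nat -> R) : Prop :=
  in_simplex n A B C F /\
  forall G, in_simplex n A B C G -> fsum n A B C F <= fsum n A B C G.

(* A hyperplane of H^n is {x | <x,u> = 0} for a spacelike u (<u,u> > 0). *)
Definition ball_separated (n : nat) (V : nat -> R) (r : R) (W1 W2 : nat -> R) : Prop :=
  exists u : nat -> R, 0 < mdot n u u /\
    (forall x, hyp n x -> hdist n V x <= r -> mdot n x u <= 0) /\
    0 < mdot n W1 u /\ 0 < mdot n W2 u.

(* At a point F of H^n the
   tangent space {v | <v,F> = 0} is Euclidean, dir F X is the unit tangent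
   vector pointing towards X, and geod F w s = sqrt(1+s^2) F + s w is the
   geodesic leaving F with unit velocity w (s is the sinh of the arclength).

   The proof is a first-variation argument.  Along geod F w, the distance to X
   decreases initially at rate at least <w, dir F X> (when X <> F), and always
   at rate at least -1, up to a quadratic error (geod_dist_first_order).  So at
   a Fermat point no direction keeping the geodesic inside the triangle has a
   positive sum of rates (fermat_no_descent).  Two instances follow.
   - Vertex case: if |FA| <= d, the hyperplane separating the ball of radius
     d + arccosh(2/sqrt 3) about A from B and C forces dir F B and dir F C to
     make an angle < 120 degrees (dirs_sum_long); moving along their sum gains
     more towards B and C than it loses towards A (fermat_far_from_vertex).
   - Edge case: if F lies on the edge BC away from B and C, dir F B = - dir F C
     and moving towards A gains (fermat_not_on_edge).
   The theorem applies the first to each vertex and then the second to each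
   edge. *)

From Stdlib Require Import Reals Lra Lia Psatz.
Open Scope R_scope.

Definition vlin (a : R) (x : nat -> R) (b : R) (y : nat -> R) : nat -> R :=
  fun i => a * x i + b * y i.

Lemma sdot_sym n x y : sdot n x y = sdot n y x.
Proof. induction n; simpl; [ring|]. rewrite IHn; ring. Qed.

Lemma sdot_vlin_l n a x b y z :
  sdot n (vlin a x b y) z = a * sdot n x z + b * sdot n y z.
Proof. induction n; simpl; [ring|]. rewrite IHn; unfold vlin; ring. Qed.

Lemma sdot_vlin_r n a x b y z :
  sdot n z (vlin a x b y) = a * sdot n z x + b * sdot n z y.
Proof. rewrite sdot_sym, sdot_vlin_l, (sdot_sym n x), (sdot_sym n y); ring. Qed.

Lemma sdot_nonneg n x : 0 <= sdot n x x.
Proof. induction n; simpl; nra. Qed.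

Lemma sdot_ext n x y z : (forall i, (i <= n)%nat -> x i = y i) ->
  sdot n x z = sdot n y z.
Proof.
  induction n; intros H; simpl; [ring|].
  rewrite IHn by (intros; apply H; lia). rewrite (H (S n)) by lia. ring.
Qed.

Lemma mdot_sym n x y : mdot n x y = mdot n y x.
Proof. unfold mdot; rewrite sdot_sym; ring. Qed.

Lemma mdot_vlin_l n a x b y z :
  mdot n (vlin a x b y) z = a * mdot n x z + b * mdot n y z.
Proof. unfold mdot; rewrite sdot_vlin_l; unfold vlin; ring. Qed.

Lemma mdot_vlin_r n a x b y z :
  mdot n z (vlin a x b y) = a * mdot n z x + b * mdot n z y.
Proof. rewrite mdot_sym, mdot_vlin_l, (mdot_sym n x), (mdot_sym n y); ring. Qed.

Lemma mdot_comb n x a y b z v :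
  (forall i, (i <= n)%nat -> x i = a * y i + b * z i) ->
  mdot n x v = a * mdot n y v + b * mdot n z v.
Proof.
  intros H. rewrite <- mdot_vlin_l. unfold mdot.
  rewrite (sdot_ext n x (vlin a y b z) v) by exact H.
  rewrite (H 0%nat) by lia. reflexivity.
Qed.

Lemma discriminant_le a b c : 0 <= c -> (forall t, 0 <= a - 2*t*b + t*t*c) -> b*b <= a*c.
Proof.
  intros Hc H.
  destruct (Rle_lt_or_eq_dec 0 c Hc) as [Hc'|Hc'].
  - specialize (H (b/c)).
    assert (E : a - 2 * (b/c) * b + (b/c)*(b/c)*c = (a*c - b*b)/c) by (field; lra).
    rewrite E in H.
    assert (0 <= a*c - b*b); [|lra].
    apply Rmult_le_reg_r with (/c). apply Rinv_0_lt_compat; lra.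
    rewrite Rmult_0_l; exact H.
  - subst c. destruct (Req_dec b 0) as [Hb|Hb]. subst; nra.
    specialize (H ((a+1)/(2*b))).
    assert (E : a - 2 * ((a+1)/(2*b)) * b + ((a+1)/(2*b))*((a+1)/(2*b))*0 = -1)
      by (field; lra).
    lra.
Qed.

Lemma sdot_cs n x y : sdot n x y * sdot n x y <= sdot n x x * sdot n y y.
Proof.
  apply discriminant_le. apply sdot_nonneg.
  intros t. pose proof (sdot_nonneg n (vlin 1 x (-t) y)) as H.
  rewrite sdot_vlin_l, !sdot_vlin_r in H. rewrite (sdot_sym n y x) in H. nra.
Qed.

Lemma hyp_mm n X : hyp n X -> mdot n X X = -1.
Proof. intros [H _]; exact H. Qed.

Lemma hyp_sdot n x : hyp n x -> sdot n x x = x 0%nat * x 0%nat - 1.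
Proof. unfold hyp, mdot; intros [H _]; lra. Qed.

(* cosh of the hyperbolic distance between F and X, so that
   hdist n F X = arccosh (chd n F X), and the matching sinh. *)
Definition chd (n : nat) (F X : nat -> R) : R := - mdot n F X.
Definition shd (n : nat) (F X : nat -> R) : R := sqrt (chd n F X * chd n F X - 1).

Lemma chd_ge1 n x y : hyp n x -> hyp n y -> 1 <= chd n x y.
Proof.
  intros Hx Hy. pose proof (hyp_sdot n x Hx). pose proof (hyp_sdot n y Hy).
  pose proof (sdot_cs n x y). destruct Hx as [_ Hx0]. destruct Hy as [_ Hy0].
  pose proof (sdot_nonneg n x). pose proof (sdot_nonneg n y).
  unfold chd, mdot. set (S := sdot n x y) in *.
  set (a := x 0%nat) in *. set (b := y 0%nat) in *.
  assert (1 <= a) by nra. assert (1 <= b) by nra.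
  match goal with H1 : sdot n x x = _, H2 : sdot n y y = _, H3 : S * S <= _ |- _ =>
    rewrite H1, H2 in H3 end.
  assert (E : (a*b - 1) * (a*b - 1) - (a*a - 1) * (b*b - 1) = (a - b) * (a - b))
    by ring.
  assert (S*S <= (a*b-1)*(a*b-1)) by (pose proof (Rle_0_sqr (a-b)); unfold Rsqr in *; lra).
  assert (1 <= a*b) by nra.
  assert (S <= a*b - 1) by nra.
  lra.
Qed.

Lemma shd_pos n F X : 1 < chd n F X ->
  0 < shd n F X /\ shd n F X * shd n F X = chd n F X * chd n F X - 1.
Proof. intros; split. apply sqrt_lt_R0; nra. apply sqrt_sqrt; nra. Qed.

Lemma upper_sheet n F x : hyp n F -> mdot n x x = -1 -> mdot n x F < 0 -> 0 < x 0%nat.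
Proof.
  intros HF Hx H. pose proof (hyp_sdot n F HF).
  assert (sdot n x x = x 0%nat * x 0%nat - 1) by (unfold mdot in Hx; lra).
  pose proof (sdot_cs n x F). destruct HF as [_ HF0].
  unfold mdot in H. set (S := sdot n x F) in *.
  set (a := x 0%nat) in *. set (b := F 0%nat) in *.
  pose proof (sdot_nonneg n F).
  destruct (Rlt_or_le 0 a) as [|Ha]; [auto|exfalso].
  assert (S < a*b) by lra. assert (a*b <= 0) by nra.
  nra.
Qed.

Lemma tangent_time_bound n F v : hyp n F -> mdot n v F = 0 ->
  v 0%nat * v 0%nat * (F 0%nat * F 0%nat) <= sdot n v v * (F 0%nat * F 0%nat - 1).
Proof.
  intros HF H. pose proof (hyp_sdot n F HF) as E. pose proof (sdot_cs n v F) as C.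
  rewrite E in C. unfold mdot in H.
  assert (E2 : sdot n v F = v 0%nat * F 0%nat) by lra. rewrite E2 in C. nra.
Qed.

Lemma tangent_nonneg n F v : hyp n F -> mdot n v F = 0 -> 0 <= mdot n v v.
Proof.
  intros HF H. pose proof (tangent_time_bound n F v HF H) as T.
  destruct HF as [_ HF0]. pose proof (sdot_nonneg n v).
  unfold mdot. set (S := sdot n v v) in *.
  set (a := v 0%nat) in *. set (b := F 0%nat) in *.
  assert (a*a*(b*b) <= S*(b*b)) by nra.
  assert (a*a <= S) by (apply Rmult_le_reg_r with (b*b); nra).
  lra.
Qed.

Lemma tangent_null n F v z : hyp n F -> mdot n v F = 0 -> mdot n v v = 0 ->
  mdot n v z = 0.
Proof.
  intros HF H H0. pose proof (tangent_time_bound n F v HF H) as T.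
  destruct HF as [_ HF0]. pose proof (sdot_nonneg n v).
  pose proof (sdot_cs n v z) as C. pose proof (sdot_nonneg n z).
  unfold mdot in *. set (S := sdot n v v) in *.
  set (a := v 0%nat) in *. set (b := F 0%nat) in *.
  assert (ES : S = a*a) by lra. rewrite ES in T.
  assert (Ha : a = 0) by nra.
  assert (HS : S = 0) by nra. rewrite HS in C.
  assert (sdot n v z = 0) by nra. rewrite Ha. lra.
Qed.

Lemma tangent_cs n F v y : hyp n F -> mdot n v F = 0 -> mdot n y F = 0 ->
  mdot n v y * mdot n v y <= mdot n v v * mdot n y y.
Proof.
  intros HF Hv Hy. rewrite (Rmult_comm (mdot n v v)).
  apply discriminant_le. apply (tangent_nonneg n F); auto.
  intros t. assert (T : mdot n (vlin (-t) v 1 y) F = 0) by (rewrite mdot_vlin_l; nra).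
  pose proof (tangent_nonneg n F _ HF T) as H.
  rewrite mdot_vlin_l, !mdot_vlin_r in H. rewrite (mdot_sym n y v) in H. nra.
Qed.

Lemma chd_le1_same n F X u : hyp n F -> hyp n X -> chd n F X <= 1 ->
  mdot n X u = mdot n F u.
Proof.
  intros HF HX H. pose proof (chd_ge1 n F X HF HX). unfold chd in *.
  pose proof (hyp_mm n F HF) as HFF. pose proof (hyp_mm n X HX) as HXX.
  set (v := vlin 1 X (-1) F).
  assert (Hv0 : mdot n v F = 0).
  { unfold v. rewrite mdot_vlin_l, HFF, (mdot_sym n X F). lra. }
  assert (Hv1 : mdot n v v = 0).
  { unfold v. rewrite !mdot_vlin_l, !mdot_vlin_r, HFF, HXX, (mdot_sym n X F). lra. }
  pose proof (tangent_null n F v u HF Hv0 Hv1) as Z.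
  unfold v in Z. rewrite mdot_vlin_l in Z. lra.
Qed.

(* Orthogonal projection of u onto the tangent space of H^n at F. *)
Definition tproj (n : nat) (F u : nat -> R) : nat -> R := vlin 1 u (mdot n F u) F.

Lemma tproj_tangent n F u : hyp n F -> mdot n (tproj n F u) F = 0.
Proof.
  intros HF. unfold tproj. rewrite mdot_vlin_l, (hyp_mm n F HF), (mdot_sym n u F). ring.
Qed.

Lemma tproj_dot n F u v : mdot n v F = 0 -> mdot n v (tproj n F u) = mdot n v u.
Proof. intros Hv. unfold tproj. rewrite mdot_vlin_r, Hv. ring. Qed.

Lemma tproj_sq n F u : hyp n F ->
  mdot n (tproj n F u) (tproj n F u) = mdot n u u + mdot n F u * mdot n F u.
Proof.
  intros HF. unfold tproj.
  rewrite !mdot_vlin_l, !mdot_vlin_r, (hyp_mm n F HF), (mdot_sym n u F). ring.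
Qed.

Definition unitv (n : nat) (v : nat -> R) : nat -> R := vlin (/ sqrt (mdot n v v)) v 0 v.

Lemma unitv_dot n v z : mdot n (unitv n v) z = mdot n v z / sqrt (mdot n v v).
Proof. unfold unitv. rewrite mdot_vlin_l. unfold Rdiv. ring. Qed.

Lemma unitv_sq n v : 0 < mdot n v v -> mdot n (unitv n v) (unitv n v) = 1.
Proof.
  intros Hv. rewrite unitv_dot. unfold unitv. rewrite mdot_vlin_r.
  set (m := mdot n v v) in *. set (s := sqrt m).
  assert (Hs : 0 < s) by (apply sqrt_lt_R0; lra).
  assert (Es : s * s = m) by (apply sqrt_sqrt; lra).
  rewrite <- Es. field. lra.
Qed.

(* The unit tangent vector at F pointing towards X (for X <> F). *)
Definition dir (n : nat) (F X : nat -> R) : nat -> R :=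
  vlin (/ shd n F X) X (- chd n F X / shd n F X) F.

Lemma dir_dot n F X z :
  mdot n (dir n F X) z = (mdot n X z - chd n F X * mdot n F z) / shd n F X.
Proof. unfold dir. rewrite mdot_vlin_l. unfold Rdiv. ring. Qed.

Lemma dir_tangent n F X : hyp n F -> mdot n (dir n F X) F = 0.
Proof.
  intros HF. rewrite dir_dot, (hyp_mm n F HF), (mdot_sym n X F). unfold chd, Rdiv. ring.
Qed.

Lemma dir_toward n F X : hyp n F -> hyp n X -> 1 < chd n F X ->
  mdot n (dir n F X) X = shd n F X.
Proof.
  intros HF HX Hx. destruct (shd_pos n F X Hx) as [Hs Es].
  rewrite dir_dot, (hyp_mm n X HX).
  replace (mdot n F X) with (- chd n F X) by (unfold chd; ring).
  apply Rmult_eq_reg_r with (shd n F X); [|lra]. rewrite Es. field. lra.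
Qed.

Lemma dir_sq n F X : hyp n F -> hyp n X -> 1 < chd n F X ->
  mdot n (dir n F X) (dir n F X) = 1.
Proof.
  intros HF HX Hx. destruct (shd_pos n F X Hx) as [Hs _].
  rewrite dir_dot, (mdot_sym n X), (mdot_sym n F), dir_tangent, dir_toward by auto.
  field. lra.
Qed.

Lemma tangent_dot_dir n F X v : mdot n v F = 0 ->
  mdot n v (dir n F X) = mdot n v X / shd n F X.
Proof.
  intros Hv. rewrite mdot_sym, dir_dot, (mdot_sym n X v), (mdot_sym n F v), Hv.
  unfold Rdiv. ring.
Qed.

Lemma tangent_dot_le_shd n F X w : hyp n F -> hyp n X ->
  mdot n w w = 1 -> mdot n w F = 0 -> - mdot n w X <= shd n F X.
Proof.
  intros HF HX Hw HwF. set (P := tproj n F X).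
  assert (HPP : mdot n P P = chd n F X * chd n F X - 1).
  { unfold P. rewrite tproj_sq, (hyp_mm n X HX) by auto. unfold chd. ring. }
  pose proof (tangent_cs n F w P HF HwF (tproj_tangent n F X HF)) as C.
  unfold P in C, HPP. rewrite HPP, Hw, (tproj_dot n F X w HwF) in C.
  unfold shd. destruct (Rle_lt_dec (- mdot n w X) 0) as [H|H].
  - pose proof (sqrt_pos (chd n F X * chd n F X - 1)); lra.
  - rewrite <- (sqrt_square (- mdot n w X)) by lra. apply sqrt_le_1_alt. nra.
Qed.

Lemma ln_le_mono x y : 0 < x -> x <= y -> ln x <= ln y.
Proof. intros Hx [H|H]. left; apply ln_increasing; auto. subst; lra. Qed.

Lemma ln_le_sub1 x : 0 < x -> ln x <= x - 1.
Proof. intros H. pose proof (exp_ineq1_le (ln x)). rewrite exp_ln in H0; lra. Qed.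

Lemma arccosh_arg_ge1 t : 1 <= t -> 1 <= t + sqrt (t*t-1).
Proof. intros; pose proof (sqrt_pos (t*t-1)); lra. Qed.

Lemma arccosh_mono x y : 1 <= x -> x <= y -> arccosh x <= arccosh y.
Proof.
  intros H1 H2. unfold arccosh. apply ln_le_mono. pose proof (arccosh_arg_ge1 x H1); lra.
  assert (sqrt (x*x-1) <= sqrt (y*y-1)) by (apply sqrt_le_1_alt; nra). lra.
Qed.

Lemma arccosh_1 : arccosh 1 = 0.
Proof.
  unfold arccosh. replace (1*1-1) with 0 by ring. rewrite sqrt_0, Rplus_0_r. apply ln_1.
Qed.

(* Addition formula: cosh (s + t) = cosh s cosh t + sinh s sinh t. *)
Lemma arccosh_add a b : 1 <= a -> 1 <= b ->
  arccosh (a*b + sqrt (a*a-1) * sqrt (b*b-1)) = arccosh a + arccosh b.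
Proof.
  intros Ha Hb. unfold arccosh.
  assert (Ea : sqrt (a*a-1) * sqrt (a*a-1) = a*a - 1) by (apply sqrt_sqrt; nra).
  assert (Eb : sqrt (b*b-1) * sqrt (b*b-1) = b*b - 1) by (apply sqrt_sqrt; nra).
  pose proof (sqrt_pos (a*a-1)). pose proof (sqrt_pos (b*b-1)).
  set (sa := sqrt (a*a-1)) in *. set (sb := sqrt (b*b-1)) in *.
  rewrite <- ln_mult by lra. f_equal.
  set (y := a*b + sa*sb).
  assert (Ey : sqrt (y*y-1) = a*sb + b*sa).
  { apply sqrt_lem_1. assert (1 <= y) by (unfold y; nra). nra. nra.
    unfold y. nra. }
  rewrite Ey. unfold y. ring.
Qed.

Lemma arccosh_le_lin c : 1 <= c -> arccosh c <= c + sqrt (c*c-1) - 1.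
Proof.
  intros H. unfold arccosh. apply ln_le_sub1. pose proof (arccosh_arg_ge1 c H); lra.
Qed.

Lemma arccosh_exp t : 1 <= t -> exists p, 1 <= p /\ arccosh t = ln p /\
  t = (p + /p)/2 /\ sqrt (t*t-1) = (p - /p)/2.
Proof.
  intros H. exists (t + sqrt (t*t-1)).
  assert (E : sqrt (t*t-1) * sqrt (t*t-1) = t*t - 1) by (apply sqrt_sqrt; nra).
  pose proof (arccosh_arg_ge1 t H).
  split; auto. split; auto.
  assert (Einv : / (t + sqrt (t*t-1)) = t - sqrt (t*t-1)).
  { field_simplify_eq. nra. lra. }
  rewrite Einv. split; field.
Qed.

Lemma arccosh_concave x y : 1 < x -> 1 <= y ->
  arccosh y <= arccosh x + (y - x) / sqrt (x*x-1).
Proof.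
  intros Hx Hy.
  assert (Hs : 0 < sqrt (x*x-1)) by (apply sqrt_lt_R0; nra).
  destruct (arccosh_exp x ltac:(lra)) as [p [Hp [Ep [Xp Sp]]]].
  destruct (arccosh_exp y Hy) as [q [Hq [Eq [Yq _]]]].
  rewrite Ep, Eq.
  set (h := ln q - ln p).
  assert (Eq' : q = p * exp h).
  { unfold h, Rminus. rewrite exp_plus, exp_Ropp, !exp_ln by lra. field. lra. }
  pose proof (exp_ineq1_le h) as E1. pose proof (exp_ineq1_le (-h)) as E2.
  rewrite exp_Ropp in E2. set (e := exp h) in *.
  assert (He : 0 < e) by (unfold e; apply exp_pos).
  replace (ln q) with (ln p + h) by (unfold h; ring).
  apply Rplus_le_compat_l.
  apply Rmult_le_reg_r with (sqrt (x*x-1)); auto.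
  unfold Rdiv. rewrite Rmult_assoc, Rinv_l, Rmult_1_r by lra.
  rewrite Sp, Xp, Yq, Eq'.
  assert (0 < /p) by (apply Rinv_0_lt_compat; lra).
  assert (0 <= p * (e - 1 - h)) by nra.
  assert (0 <= /p * (/e - 1 + h)) by nra.
  assert (E : (p*e + /(p*e))/2 - (p + /p)/2 - h * ((p - /p)/2) =
     (p * (e - 1 - h) + /p * (/e - 1 + h))/2) by (field; lra).
  lra.
Qed.

(* The point with parameter s (the sinh of the arclength) on the geodesic
   leaving F with unit tangent velocity w. *)
Definition geod (F w : nat -> R) (s : R) : nat -> R := vlin (sqrt (1 + s*s)) F s w.

Lemma cosh_of_sinh s : 1 <= sqrt (1+s*s) /\ sqrt (1+s*s) * sqrt (1+s*s) = 1 + s*s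
  /\ sqrt (1+s*s) - 1 <= s*s/2.
Proof.
  assert (E : sqrt (1+s*s) * sqrt (1+s*s) = 1 + s*s) by (apply sqrt_sqrt; nra).
  pose proof (sqrt_pos (1+s*s)).
  assert (1 <= sqrt (1+s*s)) by nra.
  repeat split; auto. nra.
Qed.

Lemma geod_hyp n F w s : hyp n F -> mdot n w w = 1 -> mdot n w F = 0 ->
  hyp n (geod F w s).
Proof.
  intros HF Hw HwF. destruct (cosh_of_sinh s) as [Hc [Ecs _]].
  pose proof (hyp_mm n F HF) as HFF. unfold geod.
  assert (E : mdot n (vlin (sqrt (1+s*s)) F s w) (vlin (sqrt (1+s*s)) F s w) = -1).
  { rewrite !mdot_vlin_l, !mdot_vlin_r, (mdot_sym n F w), HFF, Hw, HwF. nra. }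
  split; auto. apply (upper_sheet n F); auto.
  rewrite mdot_vlin_l, HFF, HwF. nra.
Qed.

(* Triangle inequality: geod F w s is at distance arccosh (sqrt (1+s^2)) from
   F. *)
Lemma geod_dist_le n F X w s : hyp n F -> hyp n X -> mdot n w w = 1 -> mdot n w F = 0 ->
  0 <= s -> hdist n (geod F w s) X <= hdist n F X + arccosh (sqrt (1+s*s)).
Proof.
  intros HF HX Hw HwF Hs. destruct (cosh_of_sinh s) as [Hc [Ecs _]].
  pose proof (tangent_dot_le_shd n F X w HF HX Hw HwF) as T.
  pose proof (chd_ge1 n F X HF HX) as R1.
  pose proof (chd_ge1 n _ X (geod_hyp n F w s HF Hw HwF) HX) as R2.
  unfold hdist, chd, shd, geod in *.
  assert (Es : sqrt (sqrt (1+s*s) * sqrt (1+s*s) - 1) = s).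
  { rewrite Ecs. replace (1 + s*s - 1) with (s*s) by ring. apply sqrt_square; auto. }
  rewrite <- arccosh_add, Es by auto.
  apply arccosh_mono; auto.
  rewrite mdot_vlin_l in *.
  assert (s * (- mdot n w X) <= s * sqrt (- mdot n F X * - mdot n F X - 1))
    by (apply Rmult_le_compat_l; auto).
  lra.
Qed.

(* a is an admissible initial rate of decrease of the distance to X when
   leaving F in direction w: always -1 (triangle inequality), and the
   component of w towards X when X <> F (first variation formula). *)
Definition descent_rate (n : nat) (F w X : nat -> R) (a : R) : Prop :=
  a = -1 \/ (1 < chd n F X /\ a = mdot n w (dir n F X)).

Lemma geod_dist_first_order n F X w a : hyp n F -> hyp n X ->
  mdot n w w = 1 -> mdot n w F = 0 -> descent_rate n F w X a ->
  exists K, 0 <= K /\ forall s, 0 <= s ->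
  hdist n (geod F w s) X <= hdist n F X - s*a + (sqrt (1+s*s) - 1) * K.
Proof.
  intros HF HX Hw HwF [Ha|[Hx Ha]].
  - exists 1. split; [lra|]. intros s Hs. destruct (cosh_of_sinh s) as [H1 [H2 _]].
    pose proof (geod_dist_le n F X w s HF HX Hw HwF Hs).
    pose proof (arccosh_le_lin _ H1).
    assert (sqrt (sqrt (1+s*s) * sqrt (1+s*s) - 1) = s).
    { rewrite H2. replace (1 + s*s - 1) with (s*s) by ring. apply sqrt_square; auto. }
    subst a. lra.
  - destruct (shd_pos n F X Hx) as [Hsx _].
    rewrite (tangent_dot_dir n F X w HwF) in Ha.
    exists (chd n F X / shd n F X). split. apply Rlt_le, Rdiv_lt_0_compat; lra.
    intros s Hs. destruct (cosh_of_sinh s) as [H1 _].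
    pose proof (chd_ge1 n _ X (geod_hyp n F w s HF Hw HwF) HX) as R2.
    eapply Rle_trans. apply (arccosh_concave (chd n F X)); eauto.
    unfold hdist, shd, chd, geod in *. rewrite mdot_vlin_l, Ha.
    right. field. lra.
Qed.

(* Nonnegative combinations of A, B, C (on the coordinates 0..n); by
   definition in_simplex n A B C G is hyp n G /\ in_cone n A B C G. *)
Definition in_cone (n : nat) (A B C G : nat -> R) : Prop :=
  exists a b c : R, 0 <= a /\ 0 <= b /\ 0 <= c /\
    forall i : nat, (i <= n)%nat -> G i = a * A i + b * B i + c * C i.

Lemma in_cone_mix n A B C F G p q r t : in_cone n A B C F ->
  0 <= p -> 0 <= q -> 0 <= r -> 0 <= t ->
  (forall i, (i <= n)%nat -> G i = p * F i + q * A i + r * B i + t * C i) ->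
  in_cone n A B C G.
Proof.
  intros [a [b [c [Ha [Hb [Hc HF]]]]]] Hp Hq Hr Ht HG.
  exists (p*a + q), (p*b + r), (p*c + t). repeat split; try nra.
  intros i Hi. rewrite HG, HF by auto. ring.
Qed.

Lemma in_cone_swap n A B C G : in_cone n A B C G -> in_cone n B A C G.
Proof.
  intros [a [b [c [Ha [Hb [Hc H]]]]]]. exists b, a, c. repeat split; auto.
  intros i Hi. rewrite H by auto. ring.
Qed.

Lemma in_cone_rot n A B C G : in_cone n A B C G -> in_cone n C A B G.
Proof.
  intros [a [b [c [Ha [Hb [Hc H]]]]]]. exists c, a, b. repeat split; auto.
  intros i Hi. rewrite H by auto. ring.
Qed.

Lemma fermat_swap n A B C F : is_fermat_point n A B C F -> is_fermat_point n B A C F.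
Proof.
  intros [[HF HFc] Hmin]. split; [split; [exact HF | exact (in_cone_swap n A B C F HFc)]|].
  intros G [HG HGc]. unfold fsum in *.
  specialize (Hmin G (conj HG (in_cone_swap n B A C G HGc))). lra.
Qed.

Lemma fermat_rot n A B C F : is_fermat_point n A B C F -> is_fermat_point n C A B F.
Proof.
  intros [[HF HFc] Hmin]. split; [split; [exact HF | exact (in_cone_rot n A B C F HFc)]|].
  intros G [HG HGc]. unfold fsum in *.
  specialize (Hmin G (conj HG (in_cone_rot n B C A G (in_cone_rot n C A B G HGc)))). lra.
Qed.

Lemma fermat_no_descent n A B C F w aA aB aC s0 :
  is_fermat_point n A B C F -> hyp n A -> hyp n B -> hyp n C ->
  mdot n w w = 1 -> mdot n w F = 0 -> 0 < s0 ->
  (forall s, 0 < s < s0 -> in_cone n A B C (geod F w s)) ->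
  descent_rate n F w A aA -> descent_rate n F w B aB -> descent_rate n F w C aC ->
  aA + aB + aC <= 0.
Proof.
  intros [[HF _] Hmin] HA HB HC Hw HwF Hs0 Hcone RA RB RC.
  apply Rnot_lt_le. intros HS.
  destruct (geod_dist_first_order n F A w aA HF HA Hw HwF RA) as [KA [HKA BA]].
  destruct (geod_dist_first_order n F B w aB HF HB Hw HwF RB) as [KB [HKB BB]].
  destruct (geod_dist_first_order n F C w aC HF HC Hw HwF RC) as [KC [HKC BC]].
  set (S := aA + aB + aC) in *. set (K := KA + KB + KC).
  (* a step s small enough that the gain s*S beats the loss (s^2/2)*K *)
  set (s := Rmin (s0/2) (S/(K+1))).
  assert (HK : 0 <= K) by (unfold K; lra).
  assert (Hs1 : s <= s0/2) by apply Rmin_l.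
  assert (Hs2 : s <= S/(K+1)) by apply Rmin_r.
  assert (Hsp : 0 < s).
  { unfold s. apply Rmin_glb_lt. lra. apply Rdiv_lt_0_compat; lra. }
  destruct (cosh_of_sinh s) as [_ [_ H3]].
  assert (HsK : s * (K+1) <= S).
  { apply Rmult_le_reg_r with (/(K+1)). apply Rinv_0_lt_compat; lra.
    rewrite Rmult_assoc, Rinv_r by lra. unfold Rdiv in Hs2. lra. }
  specialize (Hmin _ (conj (geod_hyp n F w s HF Hw HwF) (Hcone s ltac:(lra)))).
  unfold fsum in Hmin.
  specialize (BA s ltac:(lra)). specialize (BB s ltac:(lra)). specialize (BC s ltac:(lra)).
  set (c1 := sqrt (1+s*s) - 1) in *.
  assert (c1 * K <= s*s/2 * K) by (apply Rmult_le_compat_r; auto).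
  assert (s * s * K <= s * S) by nra.
  assert (c1*KA + c1*KB + c1*KC = c1 * K) by (unfold K; ring).
  assert (s*S = s*aA+s*aB+s*aC) by (unfold S; ring). assert (0 < s*S) by nra.
  lra.
Qed.

Lemma geod_in_cone n A B C F w p q r L : in_cone n A B C F ->
  0 <= p -> 0 <= q -> 0 <= r -> 0 < L ->
  (forall i, (i <= n)%nat -> w i = p * A i + q * B i + r * C i - L * F i) ->
  forall s, 0 < s < / L -> in_cone n A B C (geod F w s).
Proof.
  intros HF Hp Hq Hr HL Hw s [Hs HsL]. destruct (cosh_of_sinh s) as [Hc _].
  assert (s * L < 1).
  { apply Rmult_lt_reg_r with (/L). apply Rinv_0_lt_compat; lra.
    rewrite Rmult_assoc, Rinv_r, Rmult_1_r, Rmult_1_l by lra. exact HsL. }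
  apply (in_cone_mix n A B C F _ (sqrt (1+s*s) - s*L) (s*p) (s*q) (s*r) HF); try nra.
  intros i Hi. unfold geod, vlin. rewrite Hw by auto. ring.
Qed.

(* If F = bB + cC, then 1 = -<F,F> = b cosh|FB| + c cosh|FC|. *)
Lemma hyp_comb_sum n F B C b c : hyp n F -> hyp n B -> hyp n C ->
  (forall i, (i <= n)%nat -> F i = b * B i + c * C i) ->
  b * chd n F B + c * chd n F C = 1.
Proof.
  intros HF HB HC HFi. pose proof (mdot_comb n F b B c C F HFi) as E.
  rewrite (hyp_mm n F HF), (mdot_sym n B F), (mdot_sym n C F) in E.
  unfold chd. lra.
Qed.

Lemma edge_balance n F B C b c : hyp n F -> hyp n B -> hyp n C ->
  1 < chd n F B -> 1 < chd n F C -> 0 <= b -> 0 <= c ->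
  (forall i, (i <= n)%nat -> F i = b * B i + c * C i) ->
  0 < b /\ 0 < c /\ b * shd n F B = c * shd n F C.
Proof.
  intros HF HB HC HxB HxC Hb Hc HFi.
  destruct (shd_pos n F B HxB) as [HsB EsB]. destruct (shd_pos n F C HxC) as [HsC EsC].
  pose proof (hyp_comb_sum n F B C b c HF HB HC HFi) as E1.
  set (xB := chd n F B) in *. set (xC := chd n F C) in *.
  set (sB := shd n F B) in *. set (sC := shd n F C) in *.
  set (k := - mdot n B C).
  assert (ExB : xB = b + c*k).
  { unfold xB, chd. rewrite (mdot_comb n F b B c C B HFi), (hyp_mm n B HB),
      (mdot_sym n C B). unfold k; ring. }
  assert (ExC : xC = b*k + c).
  { unfold xC, chd. rewrite (mdot_comb n F b B c C C HFi), (hyp_mm n C HC).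
    unfold k; ring. }
  assert (Sq : (b*sB)*(b*sB) = (c*sC)*(c*sC)).
  { replace ((b*sB)*(b*sB)) with (b*b*(sB*sB)) by ring.
    replace ((c*sC)*(c*sC)) with (c*c*(sC*sC)) by ring.
    rewrite EsB, EsC.
    assert (b*xB - c*xC = b*b - c*c) by (rewrite ExB, ExC; ring).
    assert (b*b*(xB*xB) - c*c*(xC*xC) = (b*xB - c*xC)*(b*xB + c*xC)) by ring.
    nra. }
  assert (EqM : b*sB = c*sC).
  { assert (0 <= b*sB) by nra. assert (0 <= c*sC) by nra.
    assert (E : (b*sB - c*sC)*(b*sB + c*sC) = 0) by nra.
    destruct (Rmult_integral _ _ E); nra. }
  assert (Hbp : 0 < b).
  { destruct Hb as [|Hb0]; auto. subst b. exfalso.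
    assert (c = 0) by nra. subst c. lra. }
  assert (Hcp : 0 < c).
  { destruct Hc as [|Hc0]; auto. subst c. exfalso. assert (b = 0) by nra. lra. }
  auto.
Qed.

Lemma edge_dirs_opposite n F B C b c v : hyp n F -> hyp n B -> hyp n C ->
  1 < chd n F B -> 1 < chd n F C -> 0 <= b -> 0 <= c ->
  (forall i, (i <= n)%nat -> F i = b * B i + c * C i) -> mdot n v F = 0 ->
  mdot n v (dir n F B) + mdot n v (dir n F C) = 0.
Proof.
  intros HF HB HC HxB HxC Hb Hc HFi Hv.
  destruct (shd_pos n F B HxB) as [HsB _]. destruct (shd_pos n F C HxC) as [HsC _].
  destruct (edge_balance n F B C b c HF HB HC HxB HxC Hb Hc HFi) as [Hbp [Hcp EqM]].
  assert (Rel : b * mdot n v B + c * mdot n v C = 0).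
  { rewrite (mdot_sym n v B), (mdot_sym n v C), <- (mdot_comb n F b B c C v HFi),
      mdot_sym. exact Hv. }
  rewrite !(tangent_dot_dir n F _ v Hv).
  replace (mdot n v B / shd n F B + mdot n v C / shd n F C)
    with ((b * mdot n v B) / (b * shd n F B) + (c * mdot n v C) / (c * shd n F C))
    by (field; lra).
  rewrite EqM, <- Rdiv_plus_distr, Rel. unfold Rdiv; ring.
Qed.

(* A Fermat point far from all three vertices is not on an edge: otherwise
   moving towards the opposite vertex gains at rate 1 while the two other
   distances stay constant to first order. *)
Lemma fermat_not_on_edge n A B C F b c : is_fermat_point n A B C F ->
  hyp n A -> hyp n B -> hyp n C ->
  1 < chd n F A -> 1 < chd n F B -> 1 < chd n F C -> 0 <= b -> 0 <= c ->
  (forall i, (i <= n)%nat -> F i = b * B i + c * C i) -> False.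
Proof.
  intros HFm HA HB HC HxA HxB HxC Hb Hc HFi.
  pose proof HFm as [[HF HFc] _].
  destruct (shd_pos n F A HxA) as [HsA _].
  set (w := dir n F A).
  assert (Hw1 : mdot n w w = 1) by (apply dir_sq; auto).
  assert (Hw0 : mdot n w F = 0) by (apply dir_tangent; auto).
  pose proof (edge_dirs_opposite n F B C b c w HF HB HC HxB HxC Hb Hc HFi Hw0) as Opp.
  assert (Hcone : forall s, 0 < s < / (chd n F A / shd n F A) ->
            in_cone n A B C (geod F w s)).
  { apply (geod_in_cone n A B C F w (/ shd n F A) 0 0 _ HFc); try lra.
    - left; apply Rinv_0_lt_compat; lra.
    - apply Rdiv_lt_0_compat; lra.
    - intros i Hi. unfold w, dir, vlin. field. lra. }
  assert (Hs0 : 0 < / (chd n F A / shd n F A))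
    by (apply Rinv_0_lt_compat, Rdiv_lt_0_compat; lra).
  assert (RA : descent_rate n F w A 1) by (right; split; [exact HxA | symmetry; exact Hw1]).
  pose proof (fermat_no_descent n A B C F w 1 (mdot n w (dir n F B)) (mdot n w (dir n F C))
    _ HFm HA HB HC Hw1 Hw0 Hs0 Hcone RA ltac:(right; auto) ltac:(right; auto)).
  lra.
Qed.

Lemma hdist_sym n x y : hdist n x y = hdist n y x.
Proof. unfold hdist. rewrite mdot_sym. reflexivity. Qed.

(* Near the separated vertex A the separating hyperplane {<x,u> = 0} is
   steep: if |FA| <= d, the point at distance arccosh (2/sqrt 3) from F in the
   tangent direction of u is still in the ball, hence not on the positive side. *)
Lemma separated_tangent_bound n A F d u : hyp n A -> hyp n F -> hdist n F A <= d ->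
  0 < mdot n u u ->
  (forall x, hyp n x -> hdist n A x <= d + arccosh (2 / sqrt 3) -> mdot n x u <= 0) ->
  sqrt (mdot n (tproj n F u) (tproj n F u)) <= 2 * (- mdot n F u).
Proof.
  intros HA HF HFA Hq Hball.
  set (uT := tproj n F u).
  assert (HuT0 : mdot n uT F = 0) by (apply tproj_tangent; auto).
  assert (Hm2 : 0 < mdot n uT uT).
  { unfold uT. rewrite tproj_sq by auto. nra. }
  set (m := sqrt (mdot n uT uT)).
  assert (Hm : 0 < m) by (apply sqrt_lt_R0; lra).
  assert (Emm : m * m = mdot n uT uT) by (apply sqrt_sqrt; lra).
  set (nh := unitv n uT).
  assert (Hnh1 : mdot n nh nh = 1) by (apply unitv_sq; auto).
  assert (Hnh0 : mdot n nh F = 0) by (unfold nh; rewrite unitv_dot, HuT0; unfold Rdiv; ring).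
  assert (Hnhu : mdot n nh u = m).
  { unfold nh. rewrite unitv_dot. fold m.
    rewrite <- (tproj_dot n F u uT HuT0). fold uT. rewrite <- Emm. field. lra. }
  assert (H3 : 0 < sqrt 3) by (apply sqrt_lt_R0; lra).
  assert (E3 : sqrt 3 * sqrt 3 = 3) by (apply sqrt_sqrt; lra).
  (* arccosh (2/sqrt 3) is the arclength with sinh equal to 1/sqrt 3 *)
  set (s3 := 1 / sqrt 3).
  assert (Ec3 : sqrt (1 + s3*s3) = 2 / sqrt 3).
  { apply sqrt_lem_1. unfold s3. apply Rlt_le, Rplus_lt_le_0_compat; [lra|].
    apply Rle_0_sqr. apply Rlt_le, Rdiv_lt_0_compat; lra.
    unfold s3. field_simplify_eq; lra. }
  assert (Hs3 : 0 <= s3) by (unfold s3; apply Rlt_le, Rdiv_lt_0_compat; lra).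
  pose proof (geod_dist_le n F A nh s3 HF HA Hnh1 Hnh0 Hs3) as Hd.
  rewrite Ec3 in Hd.
  specialize (Hball _ (geod_hyp n F nh s3 HF Hnh1 Hnh0) ltac:(rewrite hdist_sym; lra)).
  unfold geod in Hball. rewrite mdot_vlin_l, Ec3, Hnhu in Hball.
  apply Rmult_le_reg_r with (/ sqrt 3). apply Rinv_0_lt_compat; lra.
  unfold s3, Rdiv in Hball. fold m. lra.
Qed.

Lemma dir_dot_gt n F X u : hyp n F -> hyp n X -> 1 < chd n F X ->
  0 < mdot n X u -> 0 <= - mdot n F u -> - mdot n F u < mdot n (dir n F X) u.
Proof.
  intros HF HX Hx HXu Hphi. destruct (shd_pos n F X Hx) as [Hs Es].
  rewrite dir_dot. set (phi := - mdot n F u) in *.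
  replace (mdot n F u) with (- phi) by (unfold phi; ring).
  assert (Hsx : shd n F X < chd n F X) by nra.
  apply Rmult_lt_reg_r with (shd n F X); auto.
  unfold Rdiv. rewrite Rmult_assoc, Rinv_l by lra. nra.
Qed.

(* Under the conclusion of separated_tangent_bound, with B and C on the
   positive side, the unit tangents towards B and C make an angle < 120
   degrees: their sum W has norm > 1. *)
Lemma dirs_sum_long n F B C u : hyp n F -> hyp n B -> hyp n C ->
  1 < chd n F B -> 1 < chd n F C -> 0 < mdot n B u -> 0 < mdot n C u -> 0 < mdot n u u ->
  sqrt (mdot n (tproj n F u) (tproj n F u)) <= 2 * (- mdot n F u) ->
  1 < mdot n (vlin 1 (dir n F B) 1 (dir n F C)) (vlin 1 (dir n F B) 1 (dir n F C)).
Proof.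
  intros HF HB HC HxB HxC HBu HCu Hq Hm.
  set (uT := tproj n F u) in *. set (W := vlin 1 (dir n F B) 1 (dir n F C)).
  assert (Hm2 : 0 < mdot n uT uT).
  { unfold uT. rewrite tproj_sq by auto. nra. }
  set (m := sqrt (mdot n uT uT)) in *.
  assert (Hm0 : 0 < m) by (apply sqrt_lt_R0; lra).
  assert (Emm : m * m = mdot n uT uT) by (apply sqrt_sqrt; lra).
  assert (HW0 : mdot n W F = 0).
  { unfold W. rewrite mdot_vlin_l, !dir_tangent by auto. ring. }
  assert (HWu : m < mdot n W uT).
  { unfold uT. rewrite (tproj_dot n F u W HW0). unfold W. rewrite mdot_vlin_l.
    pose proof (dir_dot_gt n F B u HF HB HxB HBu ltac:(lra)).
    pose proof (dir_dot_gt n F C u HF HC HxC HCu ltac:(lra)). lra. }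
  pose proof (tangent_cs n F W uT HF HW0 (tproj_tangent n F u HF)) as CS.
  rewrite <- Emm in CS. nra.
Qed.

Lemma dirs_sum_in_cone n A B C F : in_cone n A B C F ->
  1 < chd n F B -> 1 < chd n F C ->
  let W := vlin 1 (dir n F B) 1 (dir n F C) in 0 < mdot n W W ->
  exists s0, 0 < s0 /\ forall s, 0 < s < s0 -> in_cone n A B C (geod F (unitv n W) s).
Proof.
  intros HFc HxB HxC W HWW.
  destruct (shd_pos n F B HxB) as [HsB _]. destruct (shd_pos n F C HxC) as [HsC _].
  set (N := sqrt (mdot n W W)).
  assert (HN : 0 < N) by (apply sqrt_lt_R0; lra).
  set (L := (chd n F B / shd n F B + chd n F C / shd n F C) / N).
  assert (HL : 0 < L).
  { unfold L. apply Rdiv_lt_0_compat; [|lra].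
    apply Rplus_lt_0_compat; apply Rdiv_lt_0_compat; lra. }
  exists (/ L). split; [apply Rinv_0_lt_compat; lra|].
  apply (geod_in_cone n A B C F _ 0 (/ (N * shd n F B)) (/ (N * shd n F C)) L HFc);
    try lra; try (left; apply Rinv_0_lt_compat; nra).
  intros i Hi. unfold unitv. fold N. unfold W, dir, vlin, L. field. lra.
Qed.

(* Otherwise, moving
   along dir_F B + dir_F C gains more towards B and C than it loses towards A. *)
Lemma fermat_far_from_vertex n A B C F d : is_fermat_point n A B C F ->
  hyp n A -> hyp n B -> hyp n C ->
  ball_separated n A (d + arccosh (2 / sqrt 3)) B C -> d < hdist n F A.
Proof.
  intros HFm HA HB HC [u [Hq [Hball [HBu HCu]]]].
  apply Rnot_le_lt. intros HFA.
  pose proof HFm as [[HF HFc] _].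
  pose proof (separated_tangent_bound n A F d u HA HF HFA Hq Hball) as Hm.
  (* F is on the nonpositive side of the hyperplane, B and C strictly on the
     positive side, so both differ from F *)
  assert (HFu : 0 <= - mdot n F u)
    by (pose proof (sqrt_pos (mdot n (tproj n F u) (tproj n F u))); lra).
  assert (Far : forall X, hyp n X -> 0 < mdot n X u -> 1 < chd n F X).
  { intros X HX HXu. apply Rnot_le_lt. intros Hle.
    pose proof (chd_le1_same n F X u HF HX Hle). lra. }
  pose proof (Far B HB HBu) as HxB. pose proof (Far C HC HCu) as HxC.
  set (W := vlin 1 (dir n F B) 1 (dir n F C)).
  pose proof (dirs_sum_long n F B C u HF HB HC HxB HxC HBu HCu Hq Hm) as HWW.
  fold W in HWW.
  set (N := sqrt (mdot n W W)).
  assert (HN : 1 < N) by (unfold N; rewrite <- sqrt_1; apply sqrt_lt_1_alt; lra).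
  set (w := unitv n W).
  assert (Hw1 : mdot n w w = 1) by (apply unitv_sq; lra).
  assert (Hw0 : mdot n w F = 0).
  { unfold w. rewrite unitv_dot. unfold W. rewrite mdot_vlin_l, !dir_tangent by auto.
    unfold Rdiv; ring. }
  assert (HWW0 : 0 < mdot n W W) by lra.
  destruct (dirs_sum_in_cone n A B C F HFc HxB HxC HWW0) as [s0 [Hs0 Hcone]].
  assert (HwW : mdot n w (dir n F B) + mdot n w (dir n F C) = N).
  { assert (ENN : N * N = mdot n W W) by (apply sqrt_sqrt; lra).
    replace (mdot n w (dir n F B) + mdot n w (dir n F C)) with (mdot n w W)
      by (unfold W; rewrite mdot_vlin_r; ring).
    unfold w. rewrite unitv_dot. fold N. rewrite <- ENN. field. lra. }
  pose proof (fermat_no_descent n A B C F w (-1) (mdot n w (dir n F B))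
    (mdot n w (dir n F C)) s0 HFm HA HB HC Hw1 Hw0 Hs0 Hcone
    ltac:(left; auto) ltac:(right; auto) ltac:(right; auto)).
  lra.
Qed.

Lemma chd_gt1_of_hdist n F X : hyp n F -> hyp n X -> 0 < hdist n F X -> 1 < chd n F X.
Proof.
  intros HF HX H. pose proof (chd_ge1 n F X HF HX) as H1.
  apply Rnot_le_lt. intros Hle. unfold hdist in H. fold (chd n F X) in H.
  replace (chd n F X) with 1 in H by lra. rewrite arccosh_1 in H. lra.
Qed.

Lemma fermat_in_interior n A B C F : is_fermat_point n A B C F ->
  hyp n A -> hyp n B -> hyp n C ->
  1 < chd n F A -> 1 < chd n F B -> 1 < chd n F C -> in_triangle_interior n A B C F.
Proof.
  intros hF hA hB hC xA xB xC.
  pose proof hF as [[HF [a [b [c [Ha [Hb [Hc Hi]]]]]]] _].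
  split; [exact HF|]. exists a, b, c.
  assert (Hap : 0 < a).
  { destruct Ha as [|<-]; [auto|exfalso].
    apply (fermat_not_on_edge n A B C F b c hF hA hB hC xA xB xC Hb Hc).
    intros i Hi'. rewrite Hi by auto. ring. }
  assert (Hbp : 0 < b).
  { destruct Hb as [|<-]; [auto|exfalso].
    apply (fermat_not_on_edge n B A C F a c (fermat_swap n A B C F hF) hB hA hC xB xA xC
      (Rlt_le _ _ Hap) Hc).
    intros i Hi'. rewrite Hi by auto. ring. }
  assert (Hcp : 0 < c).
  { destruct Hc as [|<-]; [auto|exfalso].
    apply (fermat_not_on_edge n C A B F a b (fermat_rot n A B C F hF) hC hA hB xC xA xB
      (Rlt_le _ _ Hap) (Rlt_le _ _ Hbp)).
    intros i Hi'. rewrite Hi by auto. ring. }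
  auto.
Qed.

Theorem mainTheorem12 (n : nat) (hn : (2 <= n)%nat) (d : R) (hd : 0 < d)
  (A B C : nat -> R) (hA : hyp n A) (hB : hyp n B) (hC : hyp n C)
  (sepA : ball_separated n A (d + arccosh (2 / sqrt 3)) B C)
  (sepB : ball_separated n B (d + arccosh (2 / sqrt 3)) A C)
  (sepC : ball_separated n C (d + arccosh (2 / sqrt 3)) A B)
  (F : nat -> R) (hF : is_fermat_point n A B C F) :
  in_triangle_interior n A B C F /\
  d < hdist n F A /\ d < hdist n F B /\ d < hdist n F C.
Proof.
  pose proof hF as [[HF _] _].
  pose proof (fermat_far_from_vertex n A B C F d hF hA hB hC sepA) as dA.
  pose proof (fermat_far_from_vertex n B A C F d (fermat_swap n A B C F hF) hB hA hC sepB)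
    as dB.
  pose proof (fermat_far_from_vertex n C A B F d (fermat_rot n A B C F hF) hC hA hB sepC)
    as dC.
  split; [|auto].
  apply fermat_in_interior; auto; apply chd_gt1_of_hdist; auto; lra.
Qed.
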